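(* Let $U_n\subset C^n([a,b],\mathbb{K})$ ($\mathbb{K}=\mathbb{R}$ or $\mathbb{C}$, $a\ne b$) be a subspace of dimension $n+1$ possessing a Bernstein basis $p_{n,0},\dots,p_{n,n}$ for $\{a,b\}$ that is locally non-negative at $\{a,b\}$. Let $f_0\in U_n$ be strictly positive and assume that $D_{f_0}U_n$ possesses a Bernstein basis $q_{n-1,0},\dots,q_{n-1,n-1}$ for $\{a,b\}$ that is locally non-negative at $\{a,b\}$. Then the coefficients $\beta_0,\dots,\beta_n$ in the expansion $f_0=\sum_{k=0}^n\beta_kp_{n,k}$ are all positive.
   Context: A function $f\in C^m([a,b],\mathbb{K})$ has a zero of order $k$ at $c$ if $f(c)=\dots=f^{(k-1)}(c)=0$ and $f^{(k)}(c)\ne0$ (one-sided derivatives at endpoints). For an $(m+1)$-dimensional space $V\subset C^m([a,b],\mathbb{K})$, a Bernstein basis for $\{a,b\}$ is a system $p_{m,0},\dots,p_{m,m}$ in $V$ such that each $p_{m,k}$ has a zero of order exactly $k$ at $a$ and of order exactly $m-k$ at $b$. It is locally non-negative at $\{a,b\}$ if its functions are real-valued and there is $\delta>0$ with $p_{m,k}(x)\ge0$ for all $k$ and all $x\in[a,a+\delta)\cup(b-\delta,b]$. For strictly positive (real-valued, $>0$ on $[a,b]$) $f_0\in U_n$, $D_{f_0}U_n:=\{\frac{d}{dx}(f/f_0):f\in U_n\}$. *)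

(* Functions on [a,b] are modelled as R -> C; only their values on [a,b]
   matter. The scalar field K is R (realK = true: functions real-valued,
   scalars real) or C (realK = false). *)
From Stdlib Require Import Reals.
From Coquelicot Require Import Coquelicot.
Open Scope R_scope.

Definition inI (a b x : R) : Prop := a <= x <= b.

Definition inK (realK : bool) (c : C) : Prop := realK = true -> Im c = 0.

Definition Kvalued (realK : bool) (a b : R) (f : R -> C) : Prop :=
  forall x, inI a b x -> inK realK (f x).

Definition eqon (a b : R) (f g : R -> C) : Prop :=
  forall x, inI a b x -> f x = g x.

(* l is the derivative of f at x relative to [a,b]
   (one-sided at the endpoints) *)
Definition is_deriv_on (a b : R) (f : R -> C) (x : R) (l : C) : Prop :=
  forall eps : R, 0 < eps -> exists delta : R, 0 < delta /\
    forall y, inI a b y -> y <> x -> Rabs (y - x) < delta ->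
      Cmod (Cminus (Cdiv (Cminus (f y) (f x)) (RtoC (y - x))) l) < eps.

Definition cont_on (a b : R) (g : R -> C) : Prop :=
  forall x, inI a b x -> forall eps : R, 0 < eps -> exists delta : R, 0 < delta /\
    forall y, inI a b y -> Rabs (y - x) < delta -> Cmod (Cminus (g y) (g x)) < eps.

Definition derivs_on (a b : R) (m : nat) (f : R -> C) (g : nat -> R -> C) : Prop :=
  eqon a b (g O) f /\
  forall j, (j < m)%nat -> forall x, inI a b x -> is_deriv_on a b (g j) x (g (S j) x).

Definition Cm (realK : bool) (a b : R) (m : nat) (f : R -> C) : Prop :=
  Kvalued realK a b f /\
  exists g, derivs_on a b m f g /\ cont_on a b (g m).

Definition zero_order (a b : R) (f : R -> C) (c : R) (k : nat) : Prop :=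
  exists g, derivs_on a b k f g /\
    (forall j, (j < k)%nat -> g j c = RtoC 0) /\ g k c <> RtoC 0.

Definition lincomb (n : nat) (c : nat -> C) (e : nat -> R -> C) (x : R) : C :=
  sum_n (fun k => Cmult (c k) (e k x)) n.

Definition subspace (realK : bool) (a b : R) (m : nat) (U : (R -> C) -> Prop) : Prop :=
  (forall f, U f -> Cm realK a b m f) /\
  U (fun _ => RtoC 0) /\
  (forall f g c, U f -> U g -> inK realK c -> U (fun x => Cplus (Cmult c (f x)) (g x))).

Definition has_dim_succ (realK : bool) (a b : R) (N : nat) (U : (R -> C) -> Prop) : Prop :=
  exists e : nat -> R -> C,
    (forall k, (k <= N)%nat -> U (e k)) /\
    (forall c : nat -> C, (forall k, (k <= N)%nat -> inK realK (c k)) ->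
       eqon a b (lincomb N c e) (fun _ => RtoC 0) ->
       forall k, (k <= N)%nat -> c k = RtoC 0) /\
    (forall f, U f -> exists c : nat -> C,
       (forall k, (k <= N)%nat -> inK realK (c k)) /\ eqon a b f (lincomb N c e)).

Definition bernstein_basis (realK : bool) (a b : R) (m : nat)
    (V : (R -> C) -> Prop) (p : nat -> R -> C) : Prop :=
  forall k, (k <= m)%nat ->
    V (p k) /\ Cm realK a b m (p k) /\
    zero_order a b (p k) a k /\ zero_order a b (p k) b (m - k).

Definition loc_nonneg (a b : R) (m : nat) (p : nat -> R -> C) : Prop :=
  (forall k, (k <= m)%nat -> forall x, inI a b x -> Im (p k x) = 0) /\
  exists delta : R, 0 < delta /\
    forall k, (k <= m)%nat -> forall x, inI a b x ->
      (x < a + delta \/ b - delta < x) -> 0 <= Re (p k x).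

Definition strictly_pos (a b : R) (f : R -> C) : Prop :=
  forall x, inI a b x -> Im (f x) = 0 /\ 0 < Re (f x).

Definition Dspace (a b : R) (f0 : R -> C) (U : (R -> C) -> Prop) (g : R -> C) : Prop :=
  exists f, U f /\ forall x, inI a b x ->
    is_deriv_on a b (fun y => Cdiv (f y) (f0 y)) x (g x).

From Stdlib Require Import Reals Lra Lia Psatz Classical.
From Coquelicot Require Import Coquelicot.
Open Scope R_scope.

(* Write f0 = sum_k beta_k p_k.  The beta_k are real since the p_k are real and independent,
   and beta_0 > 0 since only p_0 survives at a, where it is positive.  For the step from
   beta_k to beta_(k+1), differentiate sum_j beta_j p_j / f0 = 1: the function
   r = sum_(j>k) beta_j (p_j/f0)' equals - sum_(j<=k) beta_j (p_j/f0)'.  It lies in D_f0 U,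
   whose elements are combinations of the n functions (p_j/f0)', j >= 1, so a dimension count
   gives r = sum_i g_i q_i.  The zero orders of the p_j and q_i at a and at b are
   triangular, and comparing the lowest non-vanishing derivatives yields
     g_k q_k^(k)(a)     =   beta_(k+1) p_(k+1)^(k+1)(a) / f0(a),
     g_k q_k^(n-1-k)(b) = - beta_k p_k^(n-k)(b) / f0(b).
   Local non-negativity fixes the signs of these derivatives (positive at a, alternating
   with the order at b), so beta_k > 0 forces g_k > 0 and then beta_(k+1) > 0. *)

(** * Derivatives relative to [a,b] *)

Lemma interval_point_near a b x d : a < b -> inI a b x -> 0 < d ->
  exists y, inI a b y /\ y <> x /\ Rabs (y - x) < d.
Proof.
  intros Hab [Hax Hxb] Hd.
  set (e := Rmin d (b - a) / 2).
  assert (He : 0 < e) by (unfold e; assert (0 < Rmin d (b - a)) by (apply Rmin_glb_lt; lra); lra).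
  assert (He1 : e < d) by (unfold e; pose proof (Rmin_l d (b - a)); lra).
  assert (He2 : e <= (b - a) / 2) by (unfold e; pose proof (Rmin_r d (b - a)); lra).
  destruct (Rle_dec (x + e) b).
  - exists (x + e). split; [unfold inI; lra|]. split; [lra|].
    replace (x + e - x) with e by ring. rewrite Rabs_pos_eq; lra.
  - exists (x - e). split; [unfold inI; lra|]. split; [lra|].
    replace (x - e - x) with (- e) by ring. rewrite Rabs_Ropp, Rabs_pos_eq; lra.
Qed.

Lemma Cmod_minus_triangle (u l1 l2 : C) :
  Cmod (l1 - l2) <= Cmod (u - l1) + Cmod (u - l2).
Proof.
  replace (l1 - l2)%C with ((u - l2) + - (u - l1))%C by ring.
  eapply Rle_trans; [apply Cmod_triangle|]. rewrite Cmod_opp. lra.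
Qed.

Lemma is_deriv_on_unique a b f x l1 l2 : a < b -> inI a b x ->
  is_deriv_on a b f x l1 -> is_deriv_on a b f x l2 -> l1 = l2.
Proof.
  intros Hab Hx D1 D2.
  destruct (Req_dec (Cmod (l1 - l2)) 0) as [H0|H0].
  - apply Cmod_eq_0 in H0. replace l1 with ((l1 - l2) + l2)%C by ring.
    rewrite H0. ring.
  - pose proof (Cmod_ge_0 (l1 - l2)) as Hp.
    set (d := Cmod (l1 - l2)) in *.
    destruct (D1 (d / 2)) as [d1 [Hd1 E1]]; [lra|].
    destruct (D2 (d / 2)) as [d2 [Hd2 E2]]; [lra|].
    destruct (interval_point_near a b x (Rmin d1 d2) Hab Hx) as [y [Hy [Hyx Hyd]]].
    { apply Rmin_glb_lt; auto. }
    specialize (E1 y Hy Hyx (Rlt_le_trans _ _ _ Hyd (Rmin_l _ _))).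
    specialize (E2 y Hy Hyx (Rlt_le_trans _ _ _ Hyd (Rmin_r _ _))).
    pose proof (Cmod_minus_triangle (((f y - f x) / RtoC (y - x))%C) l1 l2) as T.
    fold d in T. lra.
Qed.

Lemma is_deriv_on_ext a b f g x l : inI a b x -> eqon a b f g ->
  is_deriv_on a b f x l -> is_deriv_on a b g x l.
Proof.
  intros Hx E D eps He. destruct (D eps He) as [d [Hd H]].
  exists d. split; auto. intros y Hy Hyx Hyd.
  rewrite <- (E y Hy), <- (E x Hx). auto.
Qed.

Lemma Re_diff_quot z w l r : r <> 0 -> Re ((z - w) / r - l)%C = (Re z - Re w) / r - Re l.
Proof.
  intros Hr. destruct z, w, l. unfold Cdiv, Cminus, Cmult, Cinv, Cplus, Copp, RtoC, Re; simpl.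
  field. auto.
Qed.

Lemma Im_diff_quot z w l r : r <> 0 -> Im ((z - w) / r - l)%C = (Im z - Im w) / r - Im l.
Proof.
  intros Hr. destruct z, w, l. unfold Cdiv, Cminus, Cmult, Cinv, Cplus, Copp, RtoC, Im; simpl.
  field. auto.
Qed.

Lemma im_le_Cmod c : Rabs (Im c) <= Cmod c.
Proof.
  destruct c as [x y]. unfold Cmod, Im; simpl.
  rewrite <- sqrt_Rsqr_abs. apply sqrt_le_1_alt. unfold Rsqr. nra.
Qed.

Lemma is_deriv_on_Re a b f x l : is_deriv_on a b f x l ->
  forall eps, 0 < eps -> exists d, 0 < d /\ forall y, inI a b y -> y <> x ->
    Rabs (y - x) < d -> Rabs ((Re (f y) - Re (f x)) / (y - x) - Re l) < eps.
Proof.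
  intros D eps He. destruct (D eps He) as [d [Hd H]]. exists d; split; auto.
  intros y Hy Hyx Hyd. rewrite <- Re_diff_quot by lra.
  eapply Rle_lt_trans; [apply re_le_Cmod|]. auto.
Qed.

Lemma is_deriv_on_real a b f x l : a < b -> inI a b x ->
  (forall y, inI a b y -> Im (f y) = 0) -> is_deriv_on a b f x l -> Im l = 0.
Proof.
  intros Hab Hx Hr D.
  destruct (Req_dec (Im l) 0) as [|Hn]; auto.
  assert (Hp : 0 < Rabs (Im l)) by (apply Rabs_pos_lt; auto).
  destruct (D _ Hp) as [d [Hd H]].
  destruct (interval_point_near a b x d Hab Hx Hd) as [y [Hy [Hyx Hyd]]].
  specialize (H y Hy Hyx Hyd).
  pose proof (Rle_lt_trans _ _ _ (im_le_Cmod _) H) as H'.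
  rewrite Im_diff_quot, (Hr y Hy), (Hr x Hx) in H' by lra.
  replace ((0 - 0) / (y - x) - Im l) with (- Im l) in H' by (field; lra).
  rewrite Rabs_Ropp in H'. lra.
Qed.

(* Coquelicot equips [C] with two uniform structures (its own and the one of the
   absolute-value ring [C_AbsRing]); they have the same neighbourhoods. *)
Lemma filterlim_C_AbsRing {T} (F : (T -> Prop) -> Prop) (h : T -> C) (l : C) :
  filterlim h F (@locally C_UniformSpace l) <->
  filterlim h F (@locally (AbsRing_UniformSpace C_AbsRing) l).
Proof. split; intros H P HP; apply H; apply locally_C; exact HP. Qed.

Lemma filterlim_C_iff {T} (F : (T -> Prop) -> Prop) {FF : Filter F} (h : T -> C) (l : C) :
  filterlim h F (@locally C_UniformSpace l) <->
  (forall eps, 0 < eps -> F (fun y => Cmod (h y - l) < eps)).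
Proof.
  rewrite filterlim_C_AbsRing. split.
  - intros H eps He.
    exact (proj1 (filterlim_locally (U := AbsRing_UniformSpace C_AbsRing) _ _) H
             (mkposreal eps He)).
  - intros H. rewrite <- filterlim_C_AbsRing. apply filterlim_locally. intros eps.
    eapply filter_imp; [|exact (H eps (cond_pos eps))].
    intros y Hy. apply C_NormedModule_mixin_compat1. exact Hy.
Qed.

Definition at_within_interval (a b x : R) :=
  within (fun y => inI a b y /\ y <> x) (locally x).

Global Instance at_within_interval_filter a b x : Filter (at_within_interval a b x).
Proof. apply within_filter, locally_filter. Qed.

Definition diff_quot (f : R -> C) (x y : R) : C := ((f y - f x) / RtoC (y - x))%C.

Lemma RtoC_neq0 r : r <> 0 -> RtoC r <> 0.
Proof. intros H E. apply H. apply (f_equal Re) in E. exact E. Qed.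

Lemma is_deriv_on_filterlim a b f x l :
  is_deriv_on a b f x l <-> filterlim (diff_quot f x) (at_within_interval a b x) (locally l).
Proof.
  rewrite filterlim_C_iff; [|apply at_within_interval_filter]. split.
  - intros D eps He. destruct (D eps He) as [d [Hd H]].
    exists (mkposreal d Hd). intros y Hy [H1 H2]. apply H; auto.
  - intros H eps He. destruct (H eps He) as [d Hd].
    exists d. split; [apply cond_pos|]. intros y Hy Hyx Hyd. apply Hd; auto.
Qed.

Lemma filterlim_Cmult {T} (F : (T -> Prop) -> Prop) {FF : Filter F} (f g : T -> C) lf lg :
  filterlim f F (locally lf) -> filterlim g F (locally lg) ->
  filterlim (fun y => (f y * g y)%C) F (locally (lf * lg)%C).
Proof.
  rewrite !filterlim_C_AbsRing. intros H1 H2.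
  apply (filterlim_comp_2 f g (fun u v => @mult C_AbsRing u v) H1 H2).
  apply (filterlim_mult (K := C_AbsRing) lf lg).
Qed.

Lemma filterlim_Cplus {T} (F : (T -> Prop) -> Prop) {FF : Filter F} (f g : T -> C) lf lg :
  filterlim f F (locally lf) -> filterlim g F (locally lg) ->
  filterlim (fun y => (f y + g y)%C) F (locally (lf + lg)%C).
Proof.
  rewrite !filterlim_C_AbsRing. intros H1 H2.
  apply (filterlim_comp_2 f g (fun u v => @plus (AbsRing_NormedModule C_AbsRing) u v) H1 H2).
  apply (filterlim_plus (V := AbsRing_NormedModule C_AbsRing) lf lg).
Qed.

Lemma filterlim_Cinv {T} (F : (T -> Prop) -> Prop) {FF : Filter F} (h : T -> C) (w : C) :
  w <> 0 -> filterlim h F (locally w) ->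
  filterlim (fun y => / h y)%C F (locally (/ w))%C.
Proof.
  intros Hw H. rewrite filterlim_C_iff in H |- *.
  intros eps He.
  assert (Hm : 0 < Cmod w) by (apply Cmod_gt_0; auto).
  set (r := Rmin (Cmod w / 2) (eps * (Cmod w * Cmod w) / 2)).
  assert (Hr : 0 < r).
  { unfold r. apply Rmin_glb_lt; [lra|].
    apply Rmult_lt_0_compat; [apply Rmult_lt_0_compat; nra|lra]. }
  eapply filter_imp; [|exact (H r Hr)]. intros y Hy.
  pose proof (Rmin_l (Cmod w / 2) (eps * (Cmod w * Cmod w) / 2)) as R1.
  pose proof (Rmin_r (Cmod w / 2) (eps * (Cmod w * Cmod w) / 2)) as R2.
  fold r in R1, R2.
  assert (Hhy : Cmod w / 2 < Cmod (h y)).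
  { pose proof (Cmod_minus_triangle (h y) w 0) as Tri.
    replace (w - 0)%C with w in Tri by ring.
    replace (h y - 0)%C with (h y) in Tri by ring. lra. }
  assert (Hh0 : h y <> 0) by (apply Cmod_gt_0; lra).
  replace (/ h y - / w)%C with (- (h y - w) * / (h y * w))%C by (field; auto).
  rewrite Cmod_mult, Cmod_opp, Cmod_inv, Cmod_mult by (apply Cmult_neq_0; auto).
  apply (Rmult_lt_reg_r (Cmod (h y) * Cmod w)); [nra|].
  rewrite Rmult_assoc, Rinv_l, Rmult_1_r by nra.
  assert (eps * (Cmod w * Cmod w) / 2 < eps * (Cmod (h y) * Cmod w)).
  { assert (eps * (Cmod w / 2) * Cmod w < eps * Cmod (h y) * Cmod w)
      by (apply Rmult_lt_compat_r; [lra|apply Rmult_lt_compat_l; lra]).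
    lra. }
  simpl in Hy. lra.
  all: exact FF.
Qed.

Lemma is_deriv_on_continuous a b f x l : is_deriv_on a b f x l ->
  filterlim f (at_within_interval a b x) (locally (f x)).
Proof.
  intros D. rewrite is_deriv_on_filterlim in D.
  assert (Hid : filterlim (fun y => RtoC (y - x)) (at_within_interval a b x) (locally (RtoC 0))).
  { rewrite filterlim_C_iff; [|apply at_within_interval_filter].
    intros eps He. exists (mkposreal eps He). intros y Hy _.
    replace (RtoC (y - x) - RtoC 0)%C with (RtoC (y - x))
      by (unfold RtoC, Cminus, Cplus, Copp; simpl; f_equal; ring).
    rewrite Cmod_R. exact Hy. }
  pose proof (filterlim_Cplus _ _ _ _ _ (filterlim_Cmult _ _ _ _ _ D Hid)
                (filterlim_const (f x))) as L.
  replace (l * 0 + f x)%C with (f x) in L by ring.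
  eapply filterlim_within_ext; [|exact L].
  intros y [_ Hyx]. unfold diff_quot. field. apply RtoC_neq0. lra.
Qed.

Lemma is_deriv_on_const a b (c : C) x : is_deriv_on a b (fun _ => c) x 0.
Proof.
  rewrite is_deriv_on_filterlim. eapply filterlim_within_ext; [|apply filterlim_const].
  intros y [_ Hyx]. unfold diff_quot. field. apply RtoC_neq0. lra.
Qed.

Lemma is_deriv_on_plus a b (f g : R -> C) x lf lg :
  is_deriv_on a b f x lf -> is_deriv_on a b g x lg ->
  is_deriv_on a b (fun y => (f y + g y)%C) x (lf + lg)%C.
Proof.
  rewrite !is_deriv_on_filterlim. intros H1 H2.
  eapply filterlim_within_ext; [|exact (filterlim_Cplus _ _ _ _ _ H1 H2)].
  intros y [_ Hyx]. unfold diff_quot. field. apply RtoC_neq0. lra.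
Qed.

Lemma is_deriv_on_scal a b (f : R -> C) (c : C) x lf : is_deriv_on a b f x lf ->
  is_deriv_on a b (fun y => (c * f y)%C) x (c * lf)%C.
Proof.
  rewrite !is_deriv_on_filterlim. intros H1.
  eapply filterlim_within_ext; [|exact (filterlim_Cmult _ _ _ _ _ (filterlim_const c) H1)].
  intros y [_ Hyx]. unfold diff_quot. field. apply RtoC_neq0. lra.
Qed.

Lemma is_deriv_on_mult a b (f g : R -> C) x lf lg :
  is_deriv_on a b f x lf -> is_deriv_on a b g x lg ->
  is_deriv_on a b (fun y => (f y * g y)%C) x (lf * g x + f x * lg)%C.
Proof.
  intros D1 D2. pose proof (is_deriv_on_continuous _ _ _ _ _ D2) as Cg.
  rewrite is_deriv_on_filterlim in D1, D2 |- *.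
  eapply filterlim_within_ext;
    [|exact (filterlim_Cplus _ _ _ _ _ (filterlim_Cmult _ _ _ _ _ D1 Cg)
               (filterlim_Cmult _ _ _ _ _ (filterlim_const (f x)) D2))].
  intros y [_ Hyx]. unfold diff_quot. field. apply RtoC_neq0. lra.
Qed.

Lemma is_deriv_on_inv a b (f : R -> C) x l : inI a b x -> (forall y, inI a b y -> f y <> 0) ->
  is_deriv_on a b f x l ->
  is_deriv_on a b (fun y => / f y)%C x (- (l * (/ f x * / f x)))%C.
Proof.
  intros Hx Hnz D. pose proof (is_deriv_on_continuous _ _ _ _ _ D) as Cf.
  pose proof (filterlim_Cinv _ _ _ (Hnz x Hx) Cf) as Ci.
  rewrite is_deriv_on_filterlim in D |- *.
  replace (- (l * (/ f x * / f x)))%C with (Copp 1 * (l * (/ f x * / f x)))%C by ring.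
  eapply filterlim_within_ext;
    [|exact (filterlim_Cmult _ _ _ _ _ (filterlim_const (Copp 1))
               (filterlim_Cmult _ _ _ _ _ D
                  (filterlim_Cmult _ _ _ _ _ Ci (filterlim_const (/ f x)%C))))].
  intros y [Hy Hyx]. pose proof (Hnz y Hy). pose proof (Hnz x Hx).
  unfold diff_quot. field. repeat split; auto. apply RtoC_neq0. lra.
Qed.

(** * Tables of successive derivatives *)

Lemma derivs_on_le a b m m' f G : (m' <= m)%nat -> derivs_on a b m f G -> derivs_on a b m' f G.
Proof. intros Hm [H0 H1]. split; auto. intros j Hj. apply H1. lia. Qed.

Lemma derivs_on_shift a b m f G : derivs_on a b (S m) f G ->
  derivs_on a b m (G 1%nat) (fun j => G (S j)).
Proof. intros [_ H1]. split; [intros x Hx; reflexivity|]. intros j Hj. apply H1. lia. Qed.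

Lemma derivs_on_eqon a b m f g G : eqon a b f g -> derivs_on a b m f G -> derivs_on a b m g G.
Proof. intros E [H0 H1]. split; auto. intros x Hx. rewrite H0, E; auto. Qed.

Lemma derivs_on_ext a b m f G1 G2 :
  (forall i, (i <= m)%nat -> eqon a b (G1 i) (G2 i)) ->
  derivs_on a b m f G1 -> derivs_on a b m f G2.
Proof.
  intros E [H0 H1]. split.
  - intros x Hx. rewrite <- E by (auto; lia). auto.
  - intros j Hj x Hx. rewrite <- (E (S j)) by (auto; lia).
    apply is_deriv_on_ext with (G1 j); auto. apply E. lia.
Qed.

Lemma derivs_on_first a b m f G x : derivs_on a b (S m) f G -> inI a b x ->
  is_deriv_on a b f x (G 1%nat x).
Proof.
  intros [H0 H1] Hx. apply is_deriv_on_ext with (G 0%nat); auto. apply H1; auto. lia.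
Qed.

Definition table_cons (f : R -> C) (G : nat -> R -> C) : nat -> R -> C :=
  fun j => match j with O => f | S j' => G j' end.

Lemma derivs_on_cons a b m f g G : (forall x, inI a b x -> is_deriv_on a b f x (g x)) ->
  derivs_on a b m g G -> derivs_on a b (S m) f (table_cons f G).
Proof.
  intros D [H0 H1]. split; [intros x Hx; reflexivity|].
  intros [|j] Hj x Hx; simpl.
  - rewrite H0; auto.
  - apply H1; auto. lia.
Qed.

Lemma derivs_on_unique a b m f G1 G2 : a < b -> derivs_on a b m f G1 -> derivs_on a b m f G2 ->
  forall i, (i <= m)%nat -> eqon a b (G1 i) (G2 i).
Proof.
  intros Hab [A0 A1] [B0 B1] i. induction i as [|i IH]; intros Hi x Hx.
  - rewrite A0, B0; auto.
  - apply (is_deriv_on_unique a b (G1 i) x); [exact Hab|exact Hx|apply A1; auto|].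
    apply is_deriv_on_ext with (G2 i); auto.
    intros y Hy. symmetry. apply IH; auto. lia.
Qed.

Lemma derivs_on_plus a b m f g F G : derivs_on a b m f F -> derivs_on a b m g G ->
  derivs_on a b m (fun x => f x + g x)%C (fun j x => F j x + G j x)%C.
Proof.
  intros [A0 A1] [B0 B1]. split.
  - intros x Hx. rewrite A0, B0; auto.
  - intros j Hj x Hx. apply is_deriv_on_plus; auto.
Qed.

Lemma derivs_on_scal a b m f F (c : C) : derivs_on a b m f F ->
  derivs_on a b m (fun x => c * f x)%C (fun j x => c * F j x)%C.
Proof.
  intros [A0 A1]. split.
  - intros x Hx. rewrite A0; auto.
  - intros j Hj x Hx. apply is_deriv_on_scal; auto.
Qed.

Definition const_table (c : C) : nat -> R -> C :=
  fun j => match j with O => fun _ => c | S _ => fun _ => 0 end.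

Lemma derivs_on_const a b m (c : C) : derivs_on a b m (fun _ => c) (const_table c).
Proof.
  split; [intros x Hx; reflexivity|].
  intros [|j] Hj x Hx; apply is_deriv_on_const.
Qed.

Lemma derivs_on_lincomb a b m N (c : nat -> C) (f F : nat -> _) :
  (forall j, (j <= N)%nat -> derivs_on a b m (f j) (F j)) ->
  derivs_on a b m (lincomb N c f) (fun i => lincomb N c (fun j => F j i)).
Proof.
  unfold lincomb. induction N as [|N IH]; intros H.
  - eapply derivs_on_ext;
      [|eapply derivs_on_eqon; [|exact (derivs_on_scal _ _ _ _ _ (c O) (H O (le_n _)))]].
    + intros i Hi x Hx. rewrite sum_O. reflexivity.
    + intros x Hx. rewrite sum_O. reflexivity.
  - eapply derivs_on_ext; [|eapply derivs_on_eqon; [|exact (derivs_on_plus _ _ _ _ _ _ _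
        (IH (fun j Hj => H j ltac:(lia)))
        (derivs_on_scal _ _ _ _ _ (c (S N)) (H (S N) (le_n _))))]].
    + intros i Hi x Hx. rewrite sum_Sn. reflexivity.
    + intros x Hx. rewrite sum_Sn. reflexivity.
Qed.

Lemma derivs_on_mult_exists a b m : forall u v U V,
  derivs_on a b m u U -> derivs_on a b m v V ->
  exists W, derivs_on a b m (fun x => u x * v x)%C W.
Proof.
  induction m as [|m IH]; intros u v U V HU HV.
  - exists (fun _ x => u x * v x)%C. split; [intros x Hx; reflexivity|]. intros j Hj. lia.
  - destruct (IH (U 1%nat) v (fun j => U (S j)) V (derivs_on_shift _ _ _ _ _ HU)
                 (derivs_on_le _ _ _ m _ _ (Nat.le_succ_diag_r m) HV)) as [W1 H1].
    destruct (IH u (V 1%nat) U (fun j => V (S j))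
                 (derivs_on_le _ _ _ m _ _ (Nat.le_succ_diag_r m) HU)
                 (derivs_on_shift _ _ _ _ _ HV)) as [W2 H2].
    eexists. eapply derivs_on_cons; [|exact (derivs_on_plus _ _ _ _ _ _ _ H1 H2)].
    intros x Hx. apply is_deriv_on_mult; eapply derivs_on_first; eauto.
Qed.

Lemma derivs_on_inv_exists a b m f F : derivs_on a b m f F ->
  (forall y, inI a b y -> f y <> 0) ->
  exists R, derivs_on a b m (fun x => / f x)%C R.
Proof.
  intros HF Hnz.
  enough (Hk : forall k, (k <= m)%nat -> exists R, derivs_on a b k (fun x => / f x)%C R)
    by exact (Hk m (le_n m)).
  induction k as [|k IH]; intros Hk.
  - exists (fun _ x => / f x)%C. split; [intros x Hx; reflexivity|]. intros j Hj. lia.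
  - destruct IH as [R HR]; [lia|].
    destruct m as [|m]; [lia|].
    pose proof (derivs_on_le _ _ _ _ _ _ (le_S_n _ _ Hk) (derivs_on_shift _ _ _ _ _ HF)) as HF1.
    destruct (derivs_on_mult_exists _ _ _ _ _ _ _ HR HR) as [W HW].
    destruct (derivs_on_mult_exists _ _ _ _ _ _ _ HF1 HW) as [W2 HW2].
    eexists. eapply derivs_on_cons; [|exact (derivs_on_scal _ _ _ _ _ (Copp 1) HW2)].
    intros x Hx. eapply is_deriv_on_ext; [exact Hx|intros y Hy; reflexivity|].
    replace (Copp 1 * (F 1%nat x * (/ f x * / f x)))%C with (- (F 1%nat x * (/ f x * / f x)))%C
      by ring.
    apply is_deriv_on_inv; auto. eapply derivs_on_first; eauto.
Qed.

Lemma derivs_on_mult_vanish a b c : a < b -> inI a b c ->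
  forall k m u v U V W, (k <= m)%nat ->
  derivs_on a b m u U -> derivs_on a b m v V ->
  derivs_on a b m (fun x => u x * v x)%C W ->
  (forall i, (i < k)%nat -> U i c = 0) ->
  (forall i, (i < k)%nat -> W i c = 0) /\ W k c = (U k c * v c)%C.
Proof.
  intros Hab Hc k. induction k as [|k IH]; intros m u v U V W Hk HU HV HW HZ.
  - split; [intros; lia|]. destruct HW as [W0 _], HU as [U0 _]. rewrite W0, U0; auto.
  - destruct m as [|m]; [lia|].
    pose proof (derivs_on_le _ _ _ _ _ _ (Nat.le_succ_diag_r m) HU) as HU'.
    pose proof (derivs_on_le _ _ _ _ _ _ (Nat.le_succ_diag_r m) HV) as HV'.
    destruct (derivs_on_mult_exists _ _ _ _ _ _ _ (derivs_on_shift _ _ _ _ _ HU) HV') as [X HX].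
    destruct (derivs_on_mult_exists _ _ _ _ _ _ _ HU' (derivs_on_shift _ _ _ _ _ HV)) as [Y HY].
    assert (W1 : eqon a b (W 1%nat) (fun x => U 1%nat x * v x + u x * V 1%nat x)%C).
    { intros x Hx. apply (is_deriv_on_unique a b (fun x => u x * v x)%C x); auto.
      - eapply derivs_on_first; eauto.
      - apply is_deriv_on_mult; eapply derivs_on_first; eauto. }
    (* Leibniz: the derivatives of [u v] are those of [u' v + u v'], shifted by one. *)
    pose proof (derivs_on_unique _ _ _ _ _ _ Hab
                  (derivs_on_eqon _ _ _ _ _ _ W1 (derivs_on_shift _ _ _ _ _ HW))
                  (derivs_on_plus _ _ _ _ _ _ _ HX HY)) as EW.
    destruct (IH m _ _ _ _ X ltac:(lia) (derivs_on_shift _ _ _ _ _ HU) HV' HX) as [X0 X1].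
    { intros i Hi. apply HZ. lia. }
    destruct (IH m _ _ _ _ Y ltac:(lia) HU' (derivs_on_shift _ _ _ _ _ HV) HY) as [Y0 Y1].
    { intros i Hi. apply HZ. lia. }
    split.
    + intros [|i] Hi.
      * destruct HW as [W0 _], HU as [U0 _]. rewrite W0, <- U0, HZ by (auto; lia). ring.
      * rewrite EW, X0, Y0 by (auto; lia). ring.
    + rewrite EW, X1, Y1, (HZ k) by (auto; lia). ring.
Qed.

Definition order_at (G : nat -> R -> C) (c : R) (k : nat) : Prop :=
  (forall i, (i < k)%nat -> G i c = 0) /\ G k c <> 0.

Lemma zero_order_table a b m f G c k : a < b -> inI a b c -> (k <= m)%nat ->
  derivs_on a b m f G -> zero_order a b f c k -> order_at G c k.
Proof.
  intros Hab Hc Hk HG [g [Hg [Z N]]].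
  pose proof (derivs_on_unique a b k f G g Hab (derivs_on_le _ _ _ _ _ _ Hk HG) Hg) as E.
  split.
  - intros i Hi. rewrite E by (auto; lia). auto.
  - rewrite E by auto. auto.
Qed.
(** * Sign of the first non-vanishing derivative *)

Definition right_deriv (h : R -> R) (c l : R) : Prop :=
  forall eps, 0 < eps -> exists d, 0 < d /\ forall x, c < x < c + d ->
    Rabs ((h x - h c) / (x - c) - l) < eps.
Definition left_deriv (h : R -> R) (c l : R) : Prop :=
  forall eps, 0 < eps -> exists d, 0 < d /\ forall x, c - d < x < c ->
    Rabs ((h x - h c) / (x - c) - l) < eps.

Lemma right_deriv_zero_small h c L : right_deriv h c L -> h c = 0 ->
  forall eta, 0 < eta -> forall x, c < x -> exists y, c < y < x /\ h y < eta.
Proof.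
  intros D H0 eta He x Hx.
  destruct (D 1 Rlt_0_1) as [d [Hd H]].
  pose proof (Rabs_pos L) as HL.
  set (m := Rmin (Rmin d (x - c)) (eta / (Rabs L + 1))).
  assert (Hm : 0 < m). { unfold m. repeat apply Rmin_glb_lt; try lra.
    apply Rdiv_lt_0_compat; lra. }
  pose proof (Rmin_l (Rmin d (x - c)) (eta / (Rabs L + 1))) as M1.
  pose proof (Rmin_r (Rmin d (x - c)) (eta / (Rabs L + 1))) as M2.
  pose proof (Rmin_l d (x - c)). pose proof (Rmin_r d (x - c)).
  fold m in M1, M2.
  exists (c + m / 2). split; [lra|].
  specialize (H (c + m/2) ltac:(lra)). rewrite H0 in H.
  replace (c + m / 2 - c) with (m/2) in H by ring.
  assert (Hq : (h (c + m / 2) - 0) / (m / 2) < Rabs L + 1).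
  { apply Rabs_def2 in H. destruct H. pose proof (Rle_abs L). lra. }
  apply (Rmult_lt_compat_r (m/2)) in Hq; [|lra].
  unfold Rdiv in Hq. rewrite Rmult_assoc, Rinv_l in Hq by lra.
  assert (m * (Rabs L + 1) <= eta).
  { apply (Rmult_le_compat_r (Rabs L + 1)) in M2; [|lra].
    unfold Rdiv in M2. rewrite Rmult_assoc, Rinv_l in M2 by lra. lra. }
  nra.
Qed.

Lemma neg_of_neg_deriv_right (h h' : R -> R) c d e L : 0 < e -> c + e <= d -> h c = 0 ->
  right_deriv h c L ->
  (forall x, c < x < d -> derivable_pt_lim h x (h' x)) ->
  (forall x, c < x < c + e -> h' x < 0) ->
  forall x, c < x < c + e -> h x < 0.
Proof.
  intros He Hed H0 D Dh Hneg.
  assert (Mono : forall x y, c < y < x -> x < c + e -> h x < h y).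
  { intros x y Hy Hx.
    destruct (MVT_cor2 h h' y x ltac:(lra)) as [z [Ez Hz]].
    { intros z Hz. apply Dh. lra. }
    assert (h' z < 0) by (apply Hneg; lra). nra. }
  assert (Le : forall x, c < x < c + e -> h x <= 0).
  { intros x Hx. destruct (Rle_dec (h x) 0) as [|Hn]; auto.
    destruct (right_deriv_zero_small h c L D H0 (h x) ltac:(lra) x ltac:(lra)) as [y [Hy Hhy]].
    pose proof (Mono x y ltac:(lra) ltac:(lra)). lra. }
  intros x Hx. pose proof (Mono x ((c + x)/2) ltac:(lra) ltac:(lra)).
  pose proof (Le ((c+x)/2) ltac:(lra)). lra.
Qed.

Lemma neg_right_of_first_deriv k (h : nat -> R -> R) c d : c < d ->
  (forall j, (j <= k)%nat -> h j c = 0) ->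
  (forall j, (j <= k)%nat -> right_deriv (h j) c (h (S j) c)) ->
  (forall j, (j <= k)%nat -> forall x, c < x < d -> derivable_pt_lim (h j) x (h (S j) x)) ->
  h (S k) c < 0 ->
  exists e, 0 < e /\ c + e <= d /\ forall x, c < x < c + e -> h O x < 0.
Proof.
  intros Hcd HZ HR HD Hneg.
  assert (G : forall i, (i <= k)%nat -> exists e, 0 < e /\ c + e <= d /\
             forall x, c < x < c + e -> h (k - i)%nat x < 0).
  { induction i as [|i IH]; intros Hi.
    - destruct (HR k (le_n _) (- h (S k) c) ltac:(lra)) as [dl [Hdl Hq]].
      exists (Rmin dl (d - c)). pose proof (Rmin_l dl (d-c)). pose proof (Rmin_r dl (d-c)).
      split; [apply Rmin_glb_lt; lra|]. split; [lra|].
      intros x Hx. replace (k - 0)%nat with k by lia.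
      specialize (Hq x ltac:(lra)). rewrite (HZ k (le_n _)) in Hq.
      apply Rabs_def2 in Hq. destruct Hq as [Hq _].
      assert (Hq' : (h k x - 0) / (x - c) < 0) by lra.
      assert (0 < x - c) by lra.
      apply (Rmult_lt_compat_r (x - c)) in Hq'; auto.
      unfold Rdiv in Hq'. rewrite Rmult_assoc, Rinv_l in Hq' by lra. lra.
    - destruct (IH ltac:(lia)) as [e [He [Hed Hx]]].
      exists e. split; auto. split; auto.
      apply (neg_of_neg_deriv_right (h (k - S i)%nat) (h (k - i)%nat) c d e (h (S (k - S i)) c));
        auto.
      + apply HZ. lia.
      + apply HR. lia.
      + intros x Hx'. replace (k - i)%nat with (S (k - S i)) by lia. apply HD; auto. lia. }
  destruct (G k (le_n _)) as [e He]. exists e. replace (k - k)%nat with O in He by lia.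
  exact He.
Qed.

Lemma derivable_pt_lim_reflect f s x l : derivable_pt_lim f (s - x) l ->
  derivable_pt_lim (fun y => f (s - y)) x (- l).
Proof.
  intros D eps He. destruct (D eps He) as [d Hd]. exists d.
  intros h Hh Hhd. specialize (Hd (- h) ltac:(lra) ltac:(rewrite Rabs_Ropp; lra)).
  replace (s - (x + h)) with (s - x + - h) by ring.
  replace ((f (s - x + - h) - f (s - x)) / h - - l) with
    (- ((f (s - x + - h) - f (s - x)) / - h - l)) by (field; auto).
  rewrite Rabs_Ropp. auto.
Qed.

Lemma neg_left_of_first_deriv k (h : nat -> R -> R) c d : c < d ->
  (forall j, (j <= k)%nat -> h j d = 0) ->
  (forall j, (j <= k)%nat -> left_deriv (h j) d (h (S j) d)) ->
  (forall j, (j <= k)%nat -> forall x, c < x < d -> derivable_pt_lim (h j) x (h (S j) x)) ->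
  (-1) ^ (S k) * h (S k) d < 0 ->
  exists e, 0 < e /\ c <= d - e /\ forall x, d - e < x < d -> h O x < 0.
Proof.
  intros Hcd HZ HR HD Hneg.
  (* Apply the right-end statement to the reflection [x |-> c + d - x]. *)
  set (hr := fun j x => (-1) ^ j * h j (c + d - x)).
  destruct (neg_right_of_first_deriv k hr c d Hcd) as [e [He [Hed HH]]].
  - intros j Hj. unfold hr. replace (c + d - c) with d by ring. rewrite HZ; auto. ring.
  - intros j Hj eps Heps. destruct (HR j Hj eps Heps) as [dl [Hdl Hq]].
    exists dl. split; auto. intros x Hx. unfold hr.
    replace (c + d - c) with d by ring.
    specialize (Hq (c + d - x) ltac:(lra)).
    replace ((-1) ^ j * h j (c + d - x) - (-1) ^ j * h j d) with
      ((-1) ^ j * (h j (c + d - x) - h j d)) by ring.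
    replace ((-1) ^ j * (h j (c + d - x) - h j d) / (x - c) - (-1) ^ S j * h (S j) d)
      with ((-1) ^ S j * ((h j (c + d - x) - h j d) / (c + d - x - d) - h (S j) d)).
    2:{ simpl. field. lra. }
    rewrite Rabs_mult, pow_1_abs. lra.
  - intros j Hj x Hx. unfold hr.
    replace ((-1) ^ S j * h (S j) (c + d - x)) with ((-1) ^ j * (- h (S j) (c + d - x)))
      by (simpl; ring).
    apply (derivable_pt_lim_scal (fun y => h j (c + d - y))).
    apply derivable_pt_lim_reflect. apply HD; auto. lra.
  - unfold hr. replace (c + d - c) with d by ring. auto.
  - exists e. split; auto. split; [lra|]. intros x Hx.
    specialize (HH (c + d - x) ltac:(lra)). unfold hr in HH. simpl in HH.
    replace (c + d - (c + d - x)) with x in HH by ring. lra.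
Qed.

Lemma C_eq0 z : Re z = 0 -> Im z = 0 -> z = 0.
Proof. destruct z as [x y]. simpl. intros -> ->. reflexivity. Qed.

Lemma derivs_on_real a b m g G : a < b -> derivs_on a b m g G ->
  (forall x, inI a b x -> Im (g x) = 0) ->
  forall j, (j <= m)%nat -> forall x, inI a b x -> Im (G j x) = 0.
Proof.
  intros Hab [H0 H1] Hg j. induction j as [|j IH]; intros Hj x Hx.
  - rewrite H0; auto.
  - apply (is_deriv_on_real a b (G j) x); auto.
    all: try (intros y Hy; apply IH; auto; lia).
Qed.

Lemma is_deriv_on_right_deriv a b f l : a < b -> is_deriv_on a b f a l ->
  right_deriv (fun x => Re (f x)) a (Re l).
Proof.
  intros Hab D eps He. destruct (is_deriv_on_Re a b f a l D eps He) as [d [Hd H]].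
  exists (Rmin d (b - a)). pose proof (Rmin_l d (b-a)). pose proof (Rmin_r d (b-a)).
  split; [apply Rmin_glb_lt; lra|]. intros x Hx. apply H.
  - unfold inI. lra.
  - lra.
  - rewrite Rabs_pos_eq; lra.
Qed.

Lemma is_deriv_on_left_deriv a b f l : a < b -> is_deriv_on a b f b l ->
  left_deriv (fun x => Re (f x)) b (Re l).
Proof.
  intros Hab D eps He. destruct (is_deriv_on_Re a b f b l D eps He) as [d [Hd H]].
  exists (Rmin d (b - a)). pose proof (Rmin_l d (b-a)). pose proof (Rmin_r d (b-a)).
  split; [apply Rmin_glb_lt; lra|]. intros x Hx. apply H.
  - unfold inI. lra.
  - lra.
  - rewrite Rabs_left; lra.
Qed.

Lemma is_deriv_on_derivable_pt_lim a b f x l : a < x < b -> is_deriv_on a b f x l ->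
  derivable_pt_lim (fun y => Re (f y)) x (Re l).
Proof.
  intros Hx D eps He. destruct (is_deriv_on_Re a b f x l D eps He) as [d [Hd H]].
  set (m := Rmin d (Rmin (x - a) (b - x))).
  assert (Hm : 0 < m) by (unfold m; repeat apply Rmin_glb_lt; lra).
  pose proof (Rmin_l d (Rmin (x - a) (b - x))) as P1.
  pose proof (Rmin_r d (Rmin (x - a) (b - x))) as P2.
  pose proof (Rmin_l (x - a) (b - x)). pose proof (Rmin_r (x - a) (b - x)). fold m in P1, P2.
  exists (mkposreal m Hm). intros h Hh Hhm. simpl in Hhm.
  specialize (H (x + h)). replace (x + h - x) with h in H by ring.
  apply H.
  - unfold inI. apply Rabs_def2 in Hhm. lra.
  - lra.
  - lra.
Qed.

Lemma order_at_sign_left a b m g G k : a < b -> derivs_on a b m g G ->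
  (forall x, inI a b x -> Im (g x) = 0) -> (k <= m)%nat ->
  order_at G a k ->
  (exists d, 0 < d /\ forall x, inI a b x -> x < a + d -> 0 <= Re (g x)) ->
  0 < Re (G k a).
Proof.
  intros Hab HG Hg Hk [HZ HN] [d [Hd Hpos]].
  assert (Ha : inI a b a) by (unfold inI; lra).
  pose proof (derivs_on_real a b m g G Hab HG Hg) as HR.
  assert (Hre : Re (G k a) <> 0).
  { intro E. apply HN. apply C_eq0; auto. }
  destruct (Rlt_dec 0 (Re (G k a))) as [|Hn]; auto. exfalso.
  destruct k as [|k'].
  - destruct HG as [H0 _]. rewrite H0 in Hre, Hn by auto.
    pose proof (Hpos a Ha ltac:(lra)). lra.
  - destruct (neg_right_of_first_deriv k' (fun j x => Re (G j x)) a b Hab) as [e [He [Heb Hx]]].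
    + intros j Hj. simpl. rewrite HZ by lia. reflexivity.
    + intros j Hj. apply (is_deriv_on_right_deriv a b); auto.
      destruct HG as [_ H1]. apply H1; [lia|auto].
    + intros j Hj x Hx. apply (is_deriv_on_derivable_pt_lim a b); auto. destruct HG as [_ H1].
      apply H1; [lia|]. unfold inI. lra.
    + simpl. lra.
    + set (x := a + Rmin e d / 2).
      assert (0 < Rmin e d) by (apply Rmin_glb_lt; lra).
      pose proof (Rmin_l e d). pose proof (Rmin_r e d).
      specialize (Hx x ltac:(unfold x; lra)). simpl in Hx.
      destruct HG as [HG0 _]. rewrite HG0 in Hx by (unfold inI, x; lra).
      pose proof (Hpos x ltac:(unfold inI, x; lra) ltac:(unfold x; lra)). lra.
Qed.

Lemma order_at_sign_right a b m g G k : a < b -> derivs_on a b m g G ->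
  (forall x, inI a b x -> Im (g x) = 0) -> (k <= m)%nat ->
  order_at G b k ->
  (exists d, 0 < d /\ forall x, inI a b x -> b - d < x -> 0 <= Re (g x)) ->
  0 < (-1) ^ k * Re (G k b).
Proof.
  intros Hab HG Hg Hk [HZ HN] [d [Hd Hpos]].
  assert (Hb : inI a b b) by (unfold inI; lra).
  pose proof (derivs_on_real a b m g G Hab HG Hg) as HR.
  assert (Hre : Re (G k b) <> 0).
  { intro E. apply HN. apply C_eq0; auto. }
  assert (Hs : (-1) ^ k * Re (G k b) <> 0).
  { apply Rmult_integral_contrapositive. split; auto. apply pow_nonzero. lra. }
  destruct (Rlt_dec 0 ((-1) ^ k * Re (G k b))) as [|Hn]; auto. exfalso.
  destruct k as [|k'].
  - destruct HG as [H0 _]. rewrite H0 in Hs, Hn by auto. simpl in Hn.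
    pose proof (Hpos b Hb ltac:(lra)). simpl in Hs. lra.
  - destruct (neg_left_of_first_deriv k' (fun j x => Re (G j x)) a b Hab) as [e [He [Heb Hx]]].
    + intros j Hj. simpl. rewrite HZ by lia. reflexivity.
    + intros j Hj. apply (is_deriv_on_left_deriv a b); auto.
      destruct HG as [_ H1]. apply H1; [lia|auto].
    + intros j Hj x Hx. apply (is_deriv_on_derivable_pt_lim a b); auto. destruct HG as [_ H1].
      apply H1; [lia|]. unfold inI. lra.
    + simpl. simpl in Hn, Hs. lra.
    + set (x := b - Rmin e d / 2).
      assert (0 < Rmin e d) by (apply Rmin_glb_lt; lra).
      pose proof (Rmin_l e d). pose proof (Rmin_r e d).
      specialize (Hx x ltac:(unfold x; lra)). simpl in Hx.
      destruct HG as [HG0 _]. rewrite HG0 in Hx by (unfold inI, x; lra).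
      pose proof (Hpos x ltac:(unfold inI, x; lra) ltac:(unfold x; lra)). lra.
Qed.



(** * Finite sums and linear algebra over [C] *)

(* [sum_n] lives in an abstract monoid: hide the sums before calling [ring]/[field] on [C]. *)
Ltac abstract_sums :=
  repeat match goal with |- context [sum_n ?f ?N] =>
    let s := fresh "s" in set (s := (sum_n f N : C)) end.
Ltac ring_C := abstract_sums; lazymatch goal with |- @eq _ ?x ?y => change (@eq C x y); ring end.
Ltac field_C := abstract_sums; lazymatch goal with |- @eq _ ?x ?y => change (@eq C x y); field end.

Lemma sumC_O (f : nat -> C) : (sum_n f 0 : C) = f O.
Proof. exact (sum_O f). Qed.

Lemma sumC_S (f : nat -> C) N : (sum_n f (S N) : C) = (sum_n f N + f (S N))%C.
Proof. exact (sum_Sn f N). Qed.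

Lemma sumC_ext (f g : nat -> C) N :
  (forall j, (j <= N)%nat -> f j = g j) -> (sum_n f N : C) = sum_n g N.
Proof. exact (sum_n_ext_loc f g N). Qed.

Lemma sumC_plus (f g : nat -> C) N :
  (sum_n (fun j => f j + g j)%C N : C) = (sum_n f N + sum_n g N)%C.
Proof. exact (sum_n_plus f g N). Qed.

Lemma sumC_mult_l (c : C) (f : nat -> C) N :
  (sum_n (fun j => c * f j)%C N : C) = (c * sum_n f N)%C.
Proof. exact (sum_n_mult_l (K := C_Ring) c f N). Qed.

Lemma sumC_mult_r (c : C) (f : nat -> C) N :
  (sum_n (fun j => f j * c)%C N : C) = (sum_n f N * c)%C.
Proof. exact (sum_n_mult_r (K := C_Ring) c f N). Qed.

Lemma sumC_switch (u : nat -> nat -> C) m n :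
  (sum_n (fun i => sum_n (u i) n) m : C) = sum_n (fun j => sum_n (fun i => u i j) m) n.
Proof. exact (sum_n_switch u m n). Qed.

Lemma sumC_zero (f : nat -> C) N : (forall j, (j <= N)%nat -> f j = 0) -> (sum_n f N : C) = 0.
Proof.
  induction N as [|N IH]; intros H.
  - rewrite sumC_O. apply H. lia.
  - rewrite sumC_S, (H (S N)), IH by (auto; lia). ring.
Qed.

Lemma sumC_single (f : nat -> C) N i : (i <= N)%nat ->
  (forall j, (j <= N)%nat -> j <> i -> f j = 0) -> (sum_n f N : C) = f i.
Proof.
  induction N as [|N IH]; intros Hi H.
  - rewrite sumC_O. replace i with O by lia. reflexivity.
  - rewrite sumC_S. destruct (Nat.eq_dec i (S N)) as [->|Hne].
    + rewrite sumC_zero by (intros j Hj; apply H; lia). ring.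
    + rewrite IH, (H (S N)) by (auto; lia). ring.
Qed.

Lemma sumC_first (f : nat -> C) N : (sum_n f (S N) : C) = (f O + sum_n (fun j => f (S j)) N)%C.
Proof.
  induction N as [|N IH].
  - rewrite sumC_S, !sumC_O. reflexivity.
  - rewrite sumC_S, IH, sumC_S. ring_C.
Qed.

Definition skip (i0 i : nat) : nat := if Nat.ltb i i0 then i else S i.

Lemma sumC_skip (g : nat -> C) N i0 : (i0 <= S N)%nat ->
  (sum_n g (S N) : C) = (sum_n (fun i => g (skip i0 i)) N + g i0)%C.
Proof.
  revert i0. induction N as [|N IH]; intros i0 Hi.
  - rewrite sumC_S, !sumC_O. unfold skip.
    destruct i0 as [|[|i0]]; simpl; [ring|reflexivity|lia].
  - destruct (Nat.eq_dec i0 (S (S N))) as [->|Hne].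
    + rewrite sumC_S. f_equal. apply sumC_ext. intros j Hj. unfold skip.
      replace (Nat.ltb j (S (S N))) with true by (symmetry; apply Nat.ltb_lt; lia). reflexivity.
    + rewrite sumC_S, (IH i0), (sumC_S (fun i => g (skip i0 i))) by lia.
      unfold skip at 3. replace (Nat.ltb (S N) i0) with false by (symmetry; apply Nat.ltb_ge; lia).
      ring_C.
Qed.

Lemma Cmult_eq0_l (z w : C) : (z * w)%C = 0 -> w <> 0 -> z = 0.
Proof.
  intros H Hw. replace z with (z * w * / w)%C by (field; auto). rewrite H. ring.
Qed.

(* Forward substitution: the coefficients are determined in increasing order of [ord i]. *)
Lemma triangular_solution N L (ord : nat -> nat) (g : nat -> C) (V : nat -> nat -> C)
  (r : nat -> C) :
  (forall i j, (i <= N)%nat -> (j <= N)%nat -> ord i = ord j -> i = j) ->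
  (forall l i, (i <= N)%nat -> (l < ord i)%nat -> V l i = 0) ->
  (forall i, (i <= N)%nat -> V (ord i) i <> 0) ->
  (forall l, (l <= L)%nat -> (sum_n (fun i => g i * V l i)%C N : C) = r l) ->
  (forall l, (l < L)%nat -> r l = 0) ->
  (forall i, (i <= N)%nat -> (ord i < L)%nat -> g i = 0) /\
  (forall i, (i <= N)%nat -> ord i = L -> (g i * V L i)%C = r L).
Proof.
  intros Hinj HV HV0 Hs Hr.
  assert (Low : forall l, (l < L)%nat -> forall i, (i <= N)%nat -> ord i = l -> g i = 0).
  { intro l. induction l as [l IH] using (well_founded_induction Nat.lt_wf_0).
    intros Hl i Hi Ho. apply (Cmult_eq0_l _ (V l i)); [|subst; auto].
    rewrite <- (Hr l Hl), <- (Hs l) by lia. symmetry.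
    apply (sumC_single (fun i => g i * V l i)%C); auto.
    intros j Hj Hji. destruct (Nat.lt_total (ord j) l) as [Hlt|[Heq|Hgt]].
    - rewrite (IH (ord j) Hlt) by (auto; lia). ring.
    - exfalso. apply Hji. apply Hinj; auto. lia.
    - rewrite HV by auto. ring. }
  split.
  - intros i Hi Ho. apply (Low (ord i)); auto.
  - intros i Hi Ho. rewrite <- (Hs L) by lia. symmetry.
    apply (sumC_single (fun i => g i * V L i)%C); auto.
    intros j Hj Hji. destruct (Nat.lt_total (ord j) L) as [Hlt|[Heq|Hgt]].
    + rewrite (Low (ord j) Hlt j) by auto. ring.
    + exfalso. apply Hji. apply Hinj; auto. lia.
    + rewrite HV by auto. ring.
Qed.

Lemma finite_choice {X : Type} N (P : nat -> X -> Prop) :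
  (forall i, (i <= N)%nat -> exists x, P i x) ->
  exists f : nat -> X, forall i, (i <= N)%nat -> P i (f i).
Proof.
  induction N as [|N IH]; intros H.
  - destruct (H O (le_n _)) as [x Hx]. exists (fun _ => x). intros i Hi.
    replace i with O by lia. auto.
  - destruct IH as [f Hf]; [intros i Hi; apply H; lia|].
    destruct (H (S N) (le_n _)) as [x Hx].
    exists (fun i => if Nat.eqb i (S N) then x else f i). intros i Hi.
    destruct (Nat.eqb_spec i (S N)) as [->|Hne]; auto. apply Hf. lia.
Qed.

Definition homogeneous_solution N (A : nat -> nat -> C) (c : nat -> C) : Prop :=
  forall j, (j < N)%nat -> (sum_n (fun i => c i * A i j)%C N : C) = 0.

Definition insert_at (i0 : nat) (x : C) (c : nat -> C) (i : nat) : C :=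
  if Nat.eqb i i0 then x else c (if Nat.ltb i i0 then i else pred i).

Lemma insert_at_skip i0 x c i : insert_at i0 x c (skip i0 i) = c i.
Proof.
  unfold insert_at, skip. destruct (Nat.ltb_spec i i0).
  - replace (Nat.eqb i i0) with false by (symmetry; apply Nat.eqb_neq; lia).
    replace (Nat.ltb i i0) with true by (symmetry; apply Nat.ltb_lt; lia). reflexivity.
  - replace (Nat.eqb (S i) i0) with false by (symmetry; apply Nat.eqb_neq; lia).
    replace (Nat.ltb (S i) i0) with false by (symmetry; apply Nat.ltb_ge; lia). reflexivity.
Qed.

(* Gaussian elimination of the unknown [i0] using the last equation, whose pivot is [A i0 N]. *)
Lemma homogeneous_solution_eliminate N (A : nat -> nat -> C) i0 c :
  (i0 <= S N)%nat -> A i0 N <> 0 ->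
  homogeneous_solution N (fun i j => A (skip i0 i) j - A (skip i0 i) N / A i0 N * A i0 j)%C c ->
  homogeneous_solution (S N) A
    (insert_at i0 (- (sum_n (fun i => c i * A (skip i0 i) N)%C N / A i0 N)) c).
Proof.
  intros Hi0 Hp Hc j Hj.
  set (s := (sum_n (fun i => c i * A (skip i0 i) N)%C N : C)).
  rewrite (sumC_skip _ N i0 Hi0).
  rewrite (sumC_ext _ (fun i => c i * A (skip i0 i) j)%C)
    by (intros; rewrite insert_at_skip; reflexivity).
  unfold insert_at. rewrite Nat.eqb_refl.
  destruct (Nat.eq_dec j N) as [->|Hne].
  - fold s. field_C. exact Hp.
  - specialize (Hc j ltac:(lia)).
    rewrite (sumC_ext _ (fun i => c i * A (skip i0 i) j
                                  + (- (A i0 j / A i0 N)) * (c i * A (skip i0 i) N))%C)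
      in Hc by (intros; field_C; exact Hp).
    rewrite sumC_plus, sumC_mult_l in Hc. fold s in Hc.
    rewrite <- Hc. field_C. exact Hp.
Qed.

Lemma homogeneous_nontrivial N (A : nat -> nat -> C) :
  exists c : nat -> C, (exists i, (i <= N)%nat /\ c i <> 0) /\ homogeneous_solution N A c.
Proof.
  revert A. induction N as [|N IH]; intros A.
  - exists (fun _ => RtoC 1). split; [exists O; split; [lia|apply RtoC_neq0; lra]|].
    intros j Hj. lia.
  - destruct (classic (forall i, (i <= S N)%nat -> A i N = 0)) as [Hz|Hnz].
    + destruct (IH A) as [c [[i0 [Hi0 Hc0]] Hc]].
      exists (fun i => if Nat.leb i N then c i else 0). split.
      { exists i0. split; [lia|]. rewrite (proj2 (Nat.leb_le i0 N) Hi0). exact Hc0. }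
      intros j Hj. rewrite sumC_S, (proj2 (Nat.leb_gt (S N) N)) by lia.
      rewrite (sumC_ext _ (fun i => c i * A i j)%C)
        by (intros i Hi; rewrite (proj2 (Nat.leb_le i N) Hi); reflexivity).
      destruct (Nat.eq_dec j N) as [->|Hne].
      * rewrite sumC_zero by (intros i Hi; rewrite Hz by lia; ring). ring.
      * rewrite Hc by lia. ring.
    + apply not_all_ex_not in Hnz. destruct Hnz as [i0 Hi0].
      apply imply_to_and in Hi0. destruct Hi0 as [Hi0 Hp].
      destruct (IH (fun i j => A (skip i0 i) j - A (skip i0 i) N / A i0 N * A i0 j)%C)
        as [c [[k [Hk Hck]] Hc]].
      eexists. split; [|exact (homogeneous_solution_eliminate N A i0 c Hi0 Hp Hc)].
      exists (skip i0 k). split; [unfold skip; destruct (Nat.ltb k i0); lia|].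
      rewrite insert_at_skip. exact Hck.
Qed.

Lemma lincomb_rows_vanish N M (A : nat -> nat -> C) (c : nat -> C) (v w : nat -> R -> C) x :
  (forall i, (i <= N)%nat -> v i x = lincomb M (A i) w x) ->
  (forall j, (j <= M)%nat -> (sum_n (fun i => c i * A i j)%C N : C) = 0) ->
  lincomb N c v x = 0.
Proof.
  intros Hv Hc. unfold lincomb in *.
  rewrite (sumC_ext _ (fun i => sum_n (fun j => c i * (A i j * w j x))%C M)).
  2:{ intros i Hi. rewrite Hv, <- sumC_mult_l by auto. reflexivity. }
  rewrite sumC_switch. apply sumC_zero. intros j Hj.
  rewrite (sumC_ext _ (fun i => c i * A i j * w j x)%C) by (intros; ring).
  rewrite sumC_mult_r, Hc by auto. ring.
Qed.

Definition append_at {X} (N : nat) (F : nat -> X) (x : X) (i : nat) : X :=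
  if Nat.leb i N then F i else x.

(* The [N+2] functions [v 0, ..., v N, h] in an [N+1]-dimensional span are dependent. *)
Lemma lincomb_exchange a b N (v w : nat -> R -> C) (h : R -> C) :
  (forall c, eqon a b (lincomb N c v) (fun _ => 0) -> forall k, (k <= N)%nat -> c k = 0) ->
  (forall i, (i <= N)%nat -> exists A, eqon a b (v i) (lincomb N A w)) ->
  (exists A, eqon a b h (lincomb N A w)) ->
  exists g, eqon a b h (lincomb N g v).
Proof.
  intros Hind Hv [Ah Hh].
  destruct (finite_choice N _ Hv) as [Av HAv].
  destruct (homogeneous_nontrivial (S N) (append_at N Av Ah))
    as [c [[i0 [Hi0 Hc0]] Hc]].
  assert (Dep : forall x, inI a b x -> (lincomb N c v x + c (S N) * h x)%C = 0).
  { intros x Hx.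
    rewrite <- (lincomb_rows_vanish (S N) N (append_at N Av Ah) c (append_at N v h) w x).
    - unfold lincomb. rewrite sumC_S. unfold append_at at 2.
      rewrite (proj2 (Nat.leb_gt (S N) N)) by lia.
      f_equal. apply sumC_ext. intros i Hi. unfold append_at. rewrite (proj2 (Nat.leb_le i N) Hi).
      reflexivity.
    - intros i Hi. unfold append_at. destruct (Nat.leb_spec i N); [apply HAv|apply Hh]; auto.
    - intros j Hj. apply Hc. lia. }
  assert (HcN : c (S N) <> 0).
  { intros Hz. assert (Z : forall i, (i <= N)%nat -> c i = 0).
    { apply Hind. intros x Hx. rewrite <- (Dep x Hx), Hz. ring. }
    destruct (Nat.eq_dec i0 (S N)) as [->|Hne]; auto. apply Hc0, Z. lia. }
  exists (fun i => - c i / c (S N))%C. intros x Hx.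
  unfold lincomb. rewrite (sumC_ext _ (fun i => (- / c (S N)) * (c i * v i x))%C)
    by (intros; field_C; exact HcN).
  rewrite sumC_mult_l. fold (lincomb N c v x).
  replace (lincomb N c v x) with (lincomb N c v x + c (S N) * h x - c (S N) * h x)%C by ring.
  rewrite (Dep x Hx). field. exact HcN.
Qed.

(** * Bernstein systems *)

Lemma derivs_tables_exist realK a b m N (f : nat -> R -> C) :
  (forall j, (j <= N)%nat -> Cm realK a b m (f j)) ->
  exists F, forall j, (j <= N)%nat -> derivs_on a b m (f j) (F j).
Proof.
  intros Hf. apply (finite_choice N (fun j F => derivs_on a b m (f j) F)). intros j Hj.
  destruct (Hf j Hj) as [_ [F [HF _]]]. eauto.
Qed.

Lemma loc_nonneg_near_a a b m p k : loc_nonneg a b m p -> (k <= m)%nat ->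
  exists d, 0 < d /\ forall x, inI a b x -> x < a + d -> 0 <= Re (p k x).
Proof. intros [_ [d [Hd H]]] Hk. exists d. split; auto. Qed.

Lemma loc_nonneg_near_b a b m p k : loc_nonneg a b m p -> (k <= m)%nat ->
  exists d, 0 < d /\ forall x, inI a b x -> b - d < x -> 0 <= Re (p k x).
Proof. intros [_ [d [Hd H]]] Hk. exists d. split; auto. Qed.

Lemma lincomb_zero_derivs a b M N (c : nat -> C) g G :
  a < b -> (forall j, (j <= N)%nat -> derivs_on a b M (g j) (G j)) ->
  eqon a b (lincomb N c g) (fun _ => 0) ->
  forall l, (l <= M)%nat -> eqon a b (lincomb N c (fun j => G j l)) (fun _ => 0).
Proof.
  intros Hab HG E l Hl x Hx.
  pose proof (derivs_on_eqon _ _ _ _ _ _ E (derivs_on_lincomb a b M N c g G HG)) as H.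
  rewrite (derivs_on_unique _ _ _ _ _ _ Hab H (derivs_on_const a b M 0) l Hl x Hx).
  destruct l; reflexivity.
Qed.

Lemma lincomb_indep_of_order_at a b M N g G : a < b -> (N <= M)%nat ->
  (forall j, (j <= N)%nat -> derivs_on a b M (g j) (G j)) ->
  (forall j, (j <= N)%nat -> order_at (G j) a j) ->
  forall c, eqon a b (lincomb N c g) (fun _ => 0) -> forall k, (k <= N)%nat -> c k = 0.
Proof.
  intros Hab HNM HG HZ c E.
  assert (Ha : inI a b a) by (unfold inI; lra).
  destruct (triangular_solution N N (fun i => i) c (fun l i => G i l a) (fun _ => 0)) as [Low Top].
  - auto.
  - intros l i Hi Hl. apply HZ; auto.
  - intros i Hi. apply HZ; auto.
  - intros l Hl. apply (lincomb_zero_derivs a b M N c g G); auto. lia.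
  - auto.
  - intros k Hk. destruct (Nat.eq_dec k N) as [->|Hne].
    + apply (Cmult_eq0_l _ (G N N a)); [apply Top; auto|apply HZ; auto].
    + apply Low; auto. lia.
Qed.

Lemma C_real_eq (z : C) : Im z = 0 -> z = RtoC (Re z).
Proof. destruct z. simpl. intros ->. reflexivity. Qed.

Lemma lincomb_Im N (c : nat -> C) (e : nat -> R -> C) x :
  (forall k, (k <= N)%nat -> Im (e k x) = 0) ->
  lincomb N (fun k => RtoC (Im (c k))) e x = RtoC (Im (lincomb N c e x)).
Proof.
  intros He. unfold lincomb. induction N as [|N IH].
  - rewrite !sumC_O, (C_real_eq (e O x)) by (apply He; lia).
    rewrite im_scal_r, RtoC_mult. reflexivity.
  - rewrite !sumC_S, IH by (intros; apply He; lia).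
    rewrite (C_real_eq (e (S N) x)) by (apply He; lia).
    set (s := (sum_n (fun k => c k * e k x)%C N : C)).
    destruct s, (c (S N)). unfold RtoC, Cmult, Cplus. simpl. f_equal; ring.
Qed.

Lemma Re_mult_real_relation (g d u v w : C) :
  Im d = 0 -> Im u = 0 -> Im v = 0 -> Im w = 0 -> Re w <> 0 ->
  (g * d)%C = (u * (v * / w))%C -> Re g * Re d = Re u * (Re v / Re w).
Proof.
  intros Hd Hu Hv Hw Hw0 E.
  rewrite (C_real_eq d), (C_real_eq u), (C_real_eq v), (C_real_eq w), <- RtoC_inv, <- !RtoC_mult
    in E by auto.
  apply (f_equal Re) in E. rewrite re_scal_r in E. exact E.
Qed.

(* Eliminating [g] between the two endpoint relations of [beta_succ_pos]. *)
Lemma pos_of_endpoint_relations (s g da pa fa db pb fb bk bs : R) :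
  0 < da -> 0 < pa -> 0 < fa -> 0 < fb -> 0 < s * db -> 0 < - s * pb -> 0 < bk ->
  g * da = bs * (pa / fa) -> g * db = - bk * (pb / fb) -> 0 < bs.
Proof.
  intros Hda Hpa Hfa Hfb Hdb Hpb Hbk Ea Eb.
  assert (Hg : 0 < g).
  { assert (E : g * (s * db) = bk * (- s * pb) * / fb)
      by (replace (g * (s * db)) with (s * (g * db)) by ring; rewrite Eb; field; lra).
    assert (0 < bk * (- s * pb) * / fb)
      by (apply Rmult_lt_0_compat; [nra|apply Rinv_0_lt_compat; lra]).
    nra. }
  replace bs with (g * da * fa / pa) by (rewrite Ea; field; lra).
  apply Rdiv_lt_0_compat; [|lra]. repeat apply Rmult_lt_0_compat; lra.
Qed.

(** * Coefficients of a positive function in a Bernstein basis *)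

Section Bernstein_coefficients.

Variables (realK : bool) (a b : R) (n : nat) (U : (R -> C) -> Prop).
Variables (p : nat -> R -> C) (P : nat -> nat -> R -> C) (f0 : R -> C) (beta : nat -> C).

Hypothesis Hab : a < b.
Hypothesis U_dim : has_dim_succ realK a b n U.
Hypothesis p_basis : bernstein_basis realK a b n U p.
Hypothesis p_nonneg : loc_nonneg a b n p.
Hypothesis P_derivs : forall j, (j <= n)%nat -> derivs_on a b n (p j) (P j).
Hypothesis f0_pos : strictly_pos a b f0.
Hypothesis f0_expansion : eqon a b f0 (lincomb n beta p).

Let a_in : inI a b a. Proof. unfold inI; lra. Qed.
Let b_in : inI a b b. Proof. unfold inI; lra. Qed.

Lemma p_order_a j : (j <= n)%nat -> order_at (P j) a j.
Proof. intros Hj. apply (zero_order_table a b n (p j)); auto. apply p_basis; auto. Qed.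

Lemma p_order_b j : (j <= n)%nat -> order_at (P j) b (n - j).
Proof. intros Hj. apply (zero_order_table a b n (p j)); auto; [lia|apply p_basis; auto]. Qed.

Lemma p_independent c : eqon a b (lincomb n c p) (fun _ => 0) -> forall k, (k <= n)%nat -> c k = 0.
Proof. apply (lincomb_indep_of_order_at a b n n p P); auto. exact p_order_a. Qed.

Lemma p_spans h : U h -> exists g, eqon a b h (lincomb n g p).
Proof.
  intros Hh. destruct U_dim as [e [_ [_ He]]].
  apply (lincomb_exchange a b n p e h p_independent).
  - intros i Hi. destruct (He (p i) (proj1 (p_basis i Hi))) as [c [_ Hc]]. eauto.
  - destruct (He h Hh) as [c [_ Hc]]. eauto.
Qed.

Lemma p_real k x : (k <= n)%nat -> inI a b x -> Im (p k x) = 0.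
Proof. intros Hk Hx. apply (proj1 p_nonneg); auto. Qed.

(* The imaginary parts of the coefficients expand [Im f0 = 0]. *)
Lemma beta_real k : (k <= n)%nat -> Im (beta k) = 0.
Proof.
  intros Hk.
  assert (E : eqon a b (lincomb n (fun k => RtoC (Im (beta k))) p) (fun _ => 0)).
  { intros x Hx. rewrite lincomb_Im by (intros; apply p_real; auto).
    rewrite <- f0_expansion, (proj1 (f0_pos x Hx)) by exact Hx. reflexivity. }
  pose proof (p_independent _ E k Hk) as H. apply (f_equal Re) in H. exact H.
Qed.

Lemma p_at_a j : (j <= n)%nat -> p j a = P j O a.
Proof. intros Hj. symmetry. apply (proj1 (P_derivs j Hj)), a_in. Qed.

(* Only [p 0] survives at [a], and it is positive there. *)
Lemma beta0_pos : 0 < Re (beta O).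
Proof.
  assert (Hp0 : 0 < Re (p O a)).
  { rewrite p_at_a by lia.
    apply (order_at_sign_left a b n (p O) (P O) O Hab).
    - apply P_derivs. lia.
    - intros x Hx. apply p_real; auto. lia.
    - lia.
    - apply p_order_a. lia.
    - apply (loc_nonneg_near_a a b n); auto. lia. }
  assert (Ea : f0 a = (beta O * p O a)%C).
  { rewrite f0_expansion by exact a_in. unfold lincomb.
    apply (sumC_single (fun k => beta k * p k a)%C); [lia|].
    intros j Hj Hj0. rewrite p_at_a, (proj1 (p_order_a j Hj)) by lia. ring. }
  pose proof (proj2 (f0_pos a a_in)) as H.
  rewrite Ea, (C_real_eq (p O a)), re_scal_r in H by (apply p_real; auto; lia).
  nra.
Qed.

Lemma f0_neq0 x : inI a b x -> f0 x <> 0.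
Proof. intros Hx E. pose proof (proj2 (f0_pos x Hx)) as H. rewrite E in H. simpl in H. lra. Qed.

Section Successive_coefficients.

Variables (m : nat) (q : nat -> R -> C) (Inv : nat -> R -> C) (Q D : nat -> nat -> R -> C).

Hypothesis n_succ : n = S m.
Hypothesis q_basis : bernstein_basis realK a b m (Dspace a b f0 U) q.
Hypothesis q_nonneg : loc_nonneg a b m q.
Hypothesis Inv_derivs : derivs_on a b n (fun x => / f0 x)%C Inv.
Hypothesis Q_derivs : forall j, (j <= n)%nat -> derivs_on a b n (fun x => p j x * / f0 x)%C (Q j).
Hypothesis D_derivs : forall i, (i <= m)%nat -> derivs_on a b m (q i) (D i).

Lemma Q_order_a j : (j <= n)%nat ->
  (forall i, (i < j)%nat -> Q j i a = 0) /\ Q j j a = (P j j a * / f0 a)%C.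
Proof.
  intros Hj.
  apply (derivs_on_mult_vanish a b a Hab a_in j n (p j) (fun x => / f0 x)%C (P j) Inv); auto.
  apply p_order_a, Hj.
Qed.

Lemma Q_order_b j : (j <= n)%nat ->
  (forall i, (i < n - j)%nat -> Q j i b = 0) /\ Q j (n - j)%nat b = (P j (n - j)%nat b * / f0 b)%C.
Proof.
  intros Hj.
  apply (derivs_on_mult_vanish a b b Hab b_in (n - j) n (p j) (fun x => / f0 x)%C (P j) Inv);
    auto.
  - lia.
  - apply p_order_b, Hj.
Qed.

(* Derivatives of [sum_j beta_j p_j / f0 = 1]. *)
Lemma beta_Q_derivs l x : (1 <= l <= n)%nat -> inI a b x ->
  lincomb n beta (fun j => Q j l) x = 0.
Proof.
  intros Hl Hx.
  assert (E : eqon a b (lincomb n beta (fun j x => p j x * / f0 x)%C) (fun _ => 1)).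
  { intros y Hy. unfold lincomb.
    rewrite (sumC_ext _ (fun j => beta j * p j y * / f0 y)%C), sumC_mult_r by (intros; ring).
    fold (lincomb n beta p y). rewrite <- f0_expansion by exact Hy.
    field. apply f0_neq0, Hy. }
  pose proof (derivs_on_eqon _ _ _ _ _ _ E (derivs_on_lincomb a b n n beta _ Q Q_derivs)) as H.
  rewrite (derivs_on_unique _ _ _ _ _ _ Hab H (derivs_on_const a b n 1) l ltac:(lia) x Hx).
  destruct l; [lia|reflexivity].
Qed.

(* Since [beta 0 <> 0], the first derivative of [p 0 / f0] is redundant. *)
Lemma lincomb_Q1_reduce h : (exists g, eqon a b h (lincomb n g (fun j => Q j 1%nat))) ->
  exists g, eqon a b h (lincomb m g (fun j => Q (S j) 1%nat)).
Proof.
  intros [g Hg]. exists (fun j => g (S j) - g O * beta (S j) / beta O)%C. intros x Hx.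
  assert (Hb0 : beta O <> 0)
    by (intros E; pose proof beta0_pos as B; rewrite E in B; simpl in B; lra).
  pose proof (beta_Q_derivs 1 x ltac:(lia) Hx) as H.
  rewrite Hg by exact Hx. unfold lincomb in *. rewrite n_succ, sumC_first in H |- *.
  rewrite (sumC_ext (fun j => (g (S j) - g O * beta (S j) / beta O) * Q (S j) 1%nat x)%C
             (fun j => g (S j) * Q (S j) 1%nat x
                         + (- (g O / beta O)) * (beta (S j) * Q (S j) 1%nat x))%C)
    by (intros; field_C; exact Hb0).
  rewrite sumC_plus, sumC_mult_l.
  set (s := (sum_n (fun j => beta (S j) * Q (S j) 1%nat x)%C m : C)) in *.
  replace (Q O 1%nat x) with ((beta O * Q O 1%nat x + s - s) / beta O)%C by (field; exact Hb0).
  rewrite H. field_C. exact Hb0.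
Qed.

Lemma Dspace_lincomb_Q1 h :
  Dspace a b f0 U h -> exists g, eqon a b h (lincomb n g (fun j => Q j 1%nat)).
Proof.
  intros [u [Hu Hd]]. destruct (p_spans u Hu) as [g Hg]. exists g. intros x Hx.
  assert (D1 : derivs_on a b (S m) (lincomb n g (fun j x => p j x * / f0 x)%C)
                 (fun i => lincomb n g (fun j => Q j i))).
  { rewrite <- n_succ. apply derivs_on_lincomb, Q_derivs. }
  apply (is_deriv_on_unique a b (fun y => u y / f0 y)%C x); auto.
  apply (is_deriv_on_ext a b (lincomb n g (fun j x => p j x * / f0 x)%C)); auto.
  - intros y Hy. rewrite Hg by exact Hy. unfold lincomb, Cdiv.
    rewrite <- sumC_mult_r. apply sumC_ext. intros; ring.
  - exact (derivs_on_first _ _ _ _ _ x D1 Hx).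
Qed.

Lemma q_order_a i : (i <= m)%nat -> order_at (D i) a i.
Proof. intros Hi. apply (zero_order_table a b m (q i)); auto. apply q_basis, Hi. Qed.

Lemma q_order_b i : (i <= m)%nat -> order_at (D i) b (m - i).
Proof. intros Hi. apply (zero_order_table a b m (q i)); auto; [lia|apply q_basis, Hi]. Qed.

Lemma q_real i x : (i <= m)%nat -> inI a b x -> Im (q i x) = 0.
Proof. intros Hi Hx. apply (proj1 q_nonneg); auto. Qed.

Lemma q_independent c : eqon a b (lincomb m c q) (fun _ => 0) -> forall k, (k <= m)%nat -> c k = 0.
Proof. apply (lincomb_indep_of_order_at a b m m q D); auto. exact q_order_a. Qed.

Definition tail_coef (k j : nat) : C := if Nat.ltb k j then beta j else 0.
Definition head_coef (k j : nat) : C := if Nat.ltb k j then 0 else beta j.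

Definition tail (k : nat) : R -> C := lincomb n (tail_coef k) (fun j => Q j 1%nat).
Definition tail_derivs (k l : nat) : R -> C := lincomb n (tail_coef k) (fun j => Q j (S l)).

Lemma tail_in_q_span k : exists g, eqon a b (tail k) (lincomb m g q).
Proof.
  apply (lincomb_exchange a b m q (fun j => Q (S j) 1%nat) (tail k) q_independent).
  - intros i Hi. apply lincomb_Q1_reduce, Dspace_lincomb_Q1, q_basis, Hi.
  - apply lincomb_Q1_reduce. exists (tail_coef k). intros x Hx. reflexivity.
Qed.

Lemma tail_derivs_match k g : eqon a b (tail k) (lincomb m g q) ->
  forall l, (l <= m)%nat -> eqon a b (lincomb m g (fun i => D i l)) (tail_derivs k l).
Proof.
  intros Hg. apply (derivs_on_unique a b m (lincomb m g q)); auto.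
  - apply derivs_on_lincomb, D_derivs.
  - apply (derivs_on_eqon a b m (tail k)); auto.
    apply derivs_on_lincomb. intros j Hj.
    apply (derivs_on_shift a b m (fun x => p j x * / f0 x)%C).
    rewrite <- n_succ. apply Q_derivs, Hj.
Qed.

Lemma tail_coef_at_a k g : (k <= m)%nat -> eqon a b (tail k) (lincomb m g q) ->
  (g k * D k k a)%C = (beta (S k) * (P (S k) (S k) a * / f0 a))%C.
Proof.
  intros Hk Hg. pose proof (tail_derivs_match k g Hg) as M.
  assert (Vanish : forall (c : C) j l, (j <= n)%nat -> (l < j)%nat -> (c * Q j l a)%C = 0).
  { intros c j l Hj Hl. rewrite (proj1 (Q_order_a j Hj)) by exact Hl. ring. }
  destruct (triangular_solution m k (fun i => i) g (fun l i => D i l a)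
              (fun l => tail_derivs k l a))
    as [_ Top].
  - auto.
  - intros l i Hi Hl. apply q_order_a; auto.
  - intros i Hi. apply q_order_a; auto.
  - intros l Hl. apply (M l ltac:(lia) a a_in).
  - intros l Hl. unfold tail_derivs, lincomb. apply sumC_zero. intros j Hj.
    unfold tail_coef at 1. destruct (Nat.ltb_spec k j); [apply Vanish; lia|ring].
  - rewrite (Top k Hk eq_refl). unfold tail_derivs, lincomb.
    rewrite (sumC_single _ n (S k)); [|lia|].
    + unfold tail_coef. rewrite (proj2 (Nat.ltb_lt k (S k)) (Nat.lt_succ_diag_r k)).
      rewrite (proj2 (Q_order_a (S k) ltac:(lia))). reflexivity.
    + intros j Hj Hjk. unfold tail_coef at 1.
      destruct (Nat.ltb_spec k j); [apply Vanish; lia|ring].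
Qed.

Lemma tail_derivs_at_b k l : (l <= m)%nat ->
  tail_derivs k l b = (- lincomb n (head_coef k) (fun j => Q j (S l)) b)%C.
Proof.
  intros Hl. pose proof (beta_Q_derivs (S l) b ltac:(lia) b_in) as H.
  unfold tail_derivs, lincomb in *.
  rewrite (sumC_ext _ (fun j => tail_coef k j * Q j (S l) b + head_coef k j * Q j (S l) b)%C),
    sumC_plus in H by (intros; unfold tail_coef, head_coef; destruct (Nat.ltb k j); ring).
  set (T := (sum_n (fun j => tail_coef k j * Q j (S l) b)%C n : C)) in *.
  set (H' := (sum_n (fun j => head_coef k j * Q j (S l) b)%C n : C)) in *.
  replace T with (T + H' - H')%C by ring. rewrite H. ring.
Qed.

Lemma tail_coef_at_b k g : (k <= m)%nat -> eqon a b (tail k) (lincomb m g q) ->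
  (g k * D k (m - k) b)%C = ((- beta k) * (P k (n - k) b * / f0 b))%C.
Proof.
  intros Hk Hg. pose proof (tail_derivs_match k g Hg) as M.
  assert (Vanish : forall (c : C) j l, (j <= n)%nat -> (l < n - j)%nat -> (c * Q j l b)%C = 0).
  { intros c j l Hj Hl. rewrite (proj1 (Q_order_b j Hj)) by exact Hl. ring. }
  destruct (triangular_solution m (m - k) (fun i => m - i)%nat g (fun l i => D i l b)
              (fun l => tail_derivs k l b)) as [_ Top].
  - intros i j Hi Hj E. lia.
  - intros l i Hi Hl. apply q_order_b; auto.
  - intros i Hi. apply q_order_b; auto.
  - intros l Hl. apply (M l ltac:(lia) b b_in).
  - intros l Hl. rewrite tail_derivs_at_b by lia. unfold lincomb.
    rewrite sumC_zero; [ring|]. intros j Hj.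
    unfold head_coef at 1. destruct (Nat.ltb_spec k j); [ring|apply Vanish; lia].
  - rewrite (Top k Hk eq_refl), tail_derivs_at_b by lia. unfold lincomb.
    rewrite (sumC_single _ n k); [|lia|].
    + unfold head_coef. rewrite (proj2 (Nat.ltb_ge k k) (le_n k)).
      replace (S (m - k)) with (n - k)%nat by lia.
      rewrite (proj2 (Q_order_b k ltac:(lia))). ring.
    + intros j Hj Hjk. unfold head_coef at 1.
      destruct (Nat.ltb_spec k j); [ring|apply Vanish; lia].
Qed.

Lemma beta_succ_pos k : (k < n)%nat -> 0 < Re (beta k) -> 0 < Re (beta (S k)).
Proof.
  intros Hk Hbk. assert (Hkm : (k <= m)%nat) by lia.
  destruct (tail_in_q_span k) as [g Hg].
  assert (P_real : forall j i x, (j <= n)%nat -> (i <= n)%nat -> inI a b x -> Im (P j i x) = 0).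
  { intros j i x Hj Hi Hx. apply (derivs_on_real a b n (p j)); auto.
    intros y Hy. apply p_real; auto. }
  assert (D_real : forall i x, (i <= m)%nat -> inI a b x -> Im (D k i x) = 0).
  { intros i x Hi Hx. apply (derivs_on_real a b m (q k)); auto.
    intros y Hy. apply q_real; auto. }
  assert (f0_real : forall x, inI a b x -> Im (f0 x) = 0) by (intros x Hx; apply f0_pos, Hx).
  assert (f0_Re : forall x, inI a b x -> Re (f0 x) <> 0)
    by (intros x Hx; pose proof (proj2 (f0_pos x Hx)); lra).
  apply (pos_of_endpoint_relations ((-1) ^ (m - k)) (Re (g k))
           (Re (D k k a)) (Re (P (S k) (S k) a)) (Re (f0 a))
           (Re (D k (m - k) b)) (Re (P k (n - k) b)) (Re (f0 b)) (Re (beta k))).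
  - apply (order_at_sign_left a b m (q k) (D k) k Hab (D_derivs k Hkm)).
    + intros x Hx. apply q_real; auto.
    + exact Hkm.
    + apply q_order_a, Hkm.
    + apply (loc_nonneg_near_a a b m); auto.
  - apply (order_at_sign_left a b n (p (S k)) (P (S k)) (S k) Hab (P_derivs (S k) Hk)).
    + intros x Hx. apply p_real; auto.
    + exact Hk.
    + apply p_order_a, Hk.
    + apply (loc_nonneg_near_a a b n); auto.
  - apply f0_pos, a_in.
  - apply f0_pos, b_in.
  - apply (order_at_sign_right a b m (q k) (D k) (m - k) Hab (D_derivs k Hkm)).
    + intros x Hx. apply q_real; auto.
    + lia.
    + apply q_order_b, Hkm.
    + apply (loc_nonneg_near_b a b m); auto.
  - assert (Sb : 0 < (-1) ^ (n - k) * Re (P k (n - k)%nat b)).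
    { apply (order_at_sign_right a b n (p k) (P k) (n - k) Hab (P_derivs k ltac:(lia))).
      + intros x Hx. apply p_real; auto. lia.
      + lia.
      + apply p_order_b. lia.
      + apply (loc_nonneg_near_b a b n); auto. lia. }
    replace ((-1) ^ (n - k)) with (- (-1) ^ (m - k)) in Sb
      by (replace (n - k)%nat with (S (m - k)) by lia; simpl; ring).
    lra.
  - exact Hbk.
  - apply Re_mult_real_relation.
    + apply D_real; [exact Hkm|exact a_in].
    + apply beta_real. lia.
    + apply P_real; [lia|lia|exact a_in].
    + apply f0_real, a_in.
    + apply f0_Re, a_in.
    + apply tail_coef_at_a, Hg. exact Hkm.
  - replace (- Re (beta k)) with (Re (- beta k)%C) by reflexivity.
    apply Re_mult_real_relation.
    + apply D_real; [lia|exact b_in].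
    + simpl. rewrite beta_real by lia. ring.
    + apply P_real; [lia|lia|exact b_in].
    + apply f0_real, b_in.
    + apply f0_Re, b_in.
    + apply tail_coef_at_b, Hg. exact Hkm.
Qed.

End Successive_coefficients.

End Bernstein_coefficients.

Theorem theorem7 (realK : bool) (a b : R) (n : nat)
  (U : (R -> C) -> Prop) (p q : nat -> R -> C) (f0 : R -> C) :
  a < b ->
  subspace realK a b n U ->
  has_dim_succ realK a b n U ->
  bernstein_basis realK a b n U p ->
  loc_nonneg a b n p ->
  U f0 ->
  strictly_pos a b f0 ->
  ((1 <= n)%nat -> bernstein_basis realK a b (n - 1) (Dspace a b f0 U) q) ->
  ((1 <= n)%nat -> loc_nonneg a b (n - 1) q) ->
  (exists beta : nat -> C, (forall k, (k <= n)%nat -> inK realK (beta k)) /\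
     eqon a b f0 (lincomb n beta p)) /\
  (forall beta : nat -> C, (forall k, (k <= n)%nat -> inK realK (beta k)) ->
     eqon a b f0 (lincomb n beta p) ->
     forall k, (k <= n)%nat -> Im (beta k) = 0 /\ 0 < Re (beta k)).
Proof.
  intros Hab [U_Cm _] Hdim HB HLN HU0 Hpos HBq HLNq.
  destruct (derivs_tables_exist realK a b n n p) as [P HP].
  { intros j Hj. exact (proj1 (proj2 (HB j Hj))). }
  split.
  { destruct (p_spans realK a b n U p P Hab Hdim HB HP f0 HU0) as [beta Hbeta].
    exists beta. split; [|exact Hbeta]. intros k Hk _. eapply beta_real; eauto. }
  intros beta _ Hbeta k Hk. split; [eapply beta_real; eauto|].
  induction k as [|k IH]; [eapply beta0_pos; eauto|].
  destruct n as [|m]; [lia|].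
  specialize (HBq ltac:(lia)). specialize (HLNq ltac:(lia)).
  replace (S m - 1)%nat with m in HBq, HLNq by lia.
  destruct (U_Cm f0 HU0) as [_ [F0 [HF0 _]]].
  destruct (derivs_on_inv_exists a b (S m) f0 F0 HF0) as [Inv HInv].
  { intros x Hx. eapply f0_neq0; eauto. }
  destruct (finite_choice (S m) (fun j G => derivs_on a b (S m) (fun x => p j x * / f0 x)%C G))
    as [Q HQ].
  { intros j Hj. eapply derivs_on_mult_exists; eauto. }
  destruct (derivs_tables_exist realK a b m m q) as [D HD].
  { intros i Hi. exact (proj1 (proj2 (HBq i Hi))). }
  apply (beta_succ_pos realK a b (S m) U p P f0 beta Hab Hdim HB HLN HP Hpos Hbeta
           m q Inv Q D eq_refl HBq HLNq HInv HQ HD k); [lia|apply IH; lia].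
Qed.
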